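(* Let $G$ be a torsion-free hyperbolic group. Then every retract of $G$ is malnormal in $G$.
   Context: A subgroup $H\le G$ is a retract of $G$ if there is a homomorphism $\phi:G\to H$ with $\phi(h)=h$ for all $h\in H$. A subgroup $H\le G$ is malnormal if $H\cap gHg^{-1}=\{e\}$ for all $g\in G\setminus H$. *)

From Stdlib Require Import ZArith List.
Import ListNotations.


Record Group := {
  carrier :> Type;
  mul : carrier -> carrier -> carrier;
  one : carrier;
  inv : carrier -> carrier;
  mulA : forall x y z, mul x (mul y z) = mul (mul x y) z;
  mul1g : forall x, mul one x = x;
  mulVg : forall x, mul (inv x) x = one
}.

Section Defs.
Variable G : Group.

Fixpoint gpow (g : G) (n : nat) : G :=
  match n with O => one G | S m => mul G g (gpow g m) end.

Definition torsion_free : Prop :=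
  forall (g : G) (n : nat), gpow g (S n) = one G -> g = one G.

Definition is_subgroup (H : G -> Prop) : Prop :=
  H (one G) /\ (forall x y, H x -> H y -> H (mul G x y)) /\
  (forall x, H x -> H (inv G x)).

Definition is_hom (phi : G -> G) : Prop :=
  forall x y, phi (mul G x y) = mul G (phi x) (phi y).

Definition is_retract (H : G -> Prop) : Prop :=
  exists phi : G -> G, is_hom phi /\ (forall g, H (phi g)) /\
    (forall h, H h -> phi h = h).

Definition malnormal (H : G -> Prop) : Prop :=
  forall g, ~ H g -> forall x, H x -> H (mul G g (mul G x (inv G g))) -> x = one G.

Definition prodl (l : list G) : G := fold_right (mul G) (one G) l.

Definition has_len (S : list G) (g : G) (n : nat) : Prop :=
  exists l : list G, length l = n /\
    Forall (fun s => In s S \/ In (inv G s) S) l /\ prodl l = g.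

Definition generates (S : list G) : Prop := forall g, exists n, has_len S g n.

Definition word_len (S : list G) (g : G) (n : nat) : Prop :=
  has_len S g n /\ forall m, has_len S g m -> n <= m.

Definition wdist (S : list G) (x y : G) (n : nat) : Prop :=
  word_len S (mul G (inv G x) y) n.

(* Gromov's (Gromov-product) definition of delta-hyperbolicity of the word
   metric, with all quantities doubled to stay in Z:
   (x|z)_w >= min((x|y)_w, (y|z)_w) - delta, where
   2 (x|y)_w = d(w,x) + d(w,y) - d(x,y). *)
Definition delta_hyperbolic (S : list G) (delta : nat) : Prop :=
  forall x y z w : G, forall dwx dwy dwz dxy dyz dxz : nat,
    wdist S w x dwx -> wdist S w y dwy -> wdist S w z dwz ->
    wdist S x y dxy -> wdist S y z dyz -> wdist S x z dxz ->
    (Z.of_nat dwx + Z.of_nat dwz - Z.of_nat dxz >=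
     Z.min (Z.of_nat dwx + Z.of_nat dwy - Z.of_nat dxy)
           (Z.of_nat dwy + Z.of_nat dwz - Z.of_nat dyz) - 2 * Z.of_nat delta)%Z.

Definition hyperbolic_group : Prop :=
  exists (S : list G) (delta : nat), generates S /\ delta_hyperbolic S delta.

End Defs.

(* Let phi be the retraction onto H, and suppose 1 <> x lies in H and in g⁻¹Hg for some
   g outside H.  Conjugation by g and by phi g agree on x, so c := (phi g)⁻¹ g is a
   nontrivial element of ker phi commuting with x; applying phi and torsion-freeness
   show that (n, m) ↦ xⁿcᵐ is injective, i.e. G contains ℤ².  A hyperbolic group has no
   ℤ²: an element of length at most D that commutes with a long element z moves the
   geodesic [1, z] within 4 delta of itself near its middle, which confines it to a set
   of size O(D), whereas there are about D² elements xⁿcᵐ of length at most D. *)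
From Stdlib Require Import ZArith List Lia FinFun Classical ClassicalEpsilon.
Import ListNotations.

Notation "x ⋅ y" := (mul _ x y) (at level 40, left associativity).
Notation "x ⁻¹" := (inv _ x) (at level 3, format "x ⁻¹").

Section GroupLaws.
Context {G : Group}.
Implicit Types x y z : G.

Lemma mulgV x : x ⋅ x⁻¹ = one G.
Proof.
  transitivity (x⁻¹⁻¹ ⋅ x⁻¹ ⋅ (x ⋅ x⁻¹)).
  - rewrite mulVg, mul1g. reflexivity.
  - rewrite <- mulA, (mulA G x⁻¹ x), mulVg, mul1g. apply mulVg.
Qed.

Lemma mulg1 x : x ⋅ one G = x.
Proof. rewrite <- (mulVg G x), mulA, mulgV, mul1g. reflexivity. Qed.

Lemma mulKg x y : x⁻¹ ⋅ (x ⋅ y) = y.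
Proof. rewrite mulA, mulVg, mul1g. reflexivity. Qed.

Lemma mulKVg x y : x ⋅ (x⁻¹ ⋅ y) = y.
Proof. rewrite mulA, mulgV, mul1g. reflexivity. Qed.

Lemma mulgI x y z : x ⋅ y = x ⋅ z -> y = z.
Proof. intro E. rewrite <- (mulKg x y), E, mulKg. reflexivity. Qed.

Lemma invg_unique x y : x ⋅ y = one G -> y = x⁻¹.
Proof. intro E. apply (mulgI x). rewrite E, mulgV. reflexivity. Qed.

Lemma invgK x : x⁻¹⁻¹ = x.
Proof. symmetry. apply invg_unique, mulVg. Qed.

Lemma invMg x y : (x ⋅ y)⁻¹ = y⁻¹ ⋅ x⁻¹.
Proof.
  symmetry. apply invg_unique.
  rewrite <- mulA, (mulA G y), mulgV, mul1g, mulgV. reflexivity.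
Qed.

Lemma invg1 : (one G)⁻¹ = one G.
Proof. symmetry. apply invg_unique, mul1g. Qed.

Definition commute x y : Prop := x ⋅ y = y ⋅ x.

Lemma commute_sym x y : commute x y -> commute y x.
Proof. unfold commute. auto. Qed.

Lemma commuteM x y z : commute x z -> commute y z -> commute (x ⋅ y) z.
Proof. unfold commute. intros hx hy. rewrite <- mulA, hy, mulA, hx, mulA. reflexivity. Qed.

Lemma commute_gpow x y n : commute x y -> commute (gpow G x n) y.
Proof.
  unfold commute. intro E. induction n; simpl.
  - rewrite mul1g, mulg1. reflexivity.
  - rewrite <- mulA, IHn, !mulA, E. reflexivity.
Qed.

Lemma gpowD x n m : gpow G x (n + m) = gpow G x n ⋅ gpow G x m.
Proof. induction n; simpl. - rewrite mul1g; auto. - rewrite IHn, mulA; auto. Qed.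

Lemma gpow1 n : gpow G (one G) n = one G.
Proof. induction n; simpl; auto. rewrite IHn, mul1g; auto. Qed.

Lemma gpow_inj x : torsion_free G -> x <> one G ->
  forall n n', gpow G x n = gpow G x n' -> n = n'.
Proof.
  intros tf hx.
  assert (no_period : forall n k, gpow G x n <> gpow G x (n + S k)).
  { intros n k E. rewrite gpowD, <- (mulg1 (gpow G x n)) in E at 1.
    apply mulgI in E. apply hx, (tf x k). auto. }
  intros n n' E. destruct (lt_eq_lt_dec n n') as [[h|h]|h]; auto; exfalso.
  - apply (no_period n (n' - n - 1)). replace (n + S (n' - n - 1)) with n' by lia. auto.
  - apply (no_period n' (n - n' - 1)). replace (n' + S (n - n' - 1)) with n by lia. auto.
Qed.

Section Homomorphism.
Variable phi : G -> G.
Hypothesis hom : is_hom G phi.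

Lemma hom_one : phi (one G) = one G.
Proof. symmetry. apply (mulgI (phi (one G))). rewrite <- hom, !mulg1. reflexivity. Qed.

Lemma hom_inv x : phi x⁻¹ = (phi x)⁻¹.
Proof. apply invg_unique. rewrite <- hom, mulgV. apply hom_one. Qed.

Lemma hom_gpow x n : phi (gpow G x n) = gpow G (phi x) n.
Proof. induction n; simpl. - apply hom_one. - rewrite hom, IHn. reflexivity. Qed.

Lemma gpow_pair_inj x c : torsion_free G -> x <> one G -> c <> one G ->
  phi x = x -> phi c = one G ->
  forall n m n' m', gpow G x n ⋅ gpow G c m = gpow G x n' ⋅ gpow G c m' -> n = n' /\ m = m'.
Proof.
  intros tf hx hc phix phic n m n' m' E.
  assert (En : gpow G x n = gpow G x n').
  { pose proof (f_equal phi E) as E'.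
    rewrite !hom, !hom_gpow, phix, phic, !gpow1, !mulg1 in E'. exact E'. }
  pose proof (gpow_inj x tf hx n n' En) as <-.
  apply mulgI in E. split; auto. exact (gpow_inj c tf hc m m' E).
Qed.

End Homomorphism.
End GroupLaws.

Lemma NoDup_list_prod {A B : Type} (l1 : list A) (l2 : list B) :
  NoDup l1 -> NoDup l2 -> NoDup (list_prod l1 l2).
Proof.
  intros N1 N2. induction N1 as [|a l1 a_notin N1 IH]; simpl; [constructor|].
  apply NoDup_app; auto.
  - apply Injective_map_NoDup; auto. intros b b' E. injection E. auto.
  - intros [a' b] hab hin. apply in_map_iff in hab as [b' [E _]]. injection E as <- <-.
    apply in_prod_iff in hin as [? _]. auto.
Qed.
Section WordMetric.
Variables (G : Group) (S : list G).
Hypothesis gen : generates G S.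

Lemma prodl_app (l1 l2 : list G) : prodl G (l1 ++ l2) = prodl G l1 ⋅ prodl G l2.
Proof. induction l1; simpl. - rewrite mul1g; auto. - rewrite IHl1, mulA; auto. Qed.

Lemma prodl_rev_inv (l : list G) : prodl G (rev (map (inv G) l)) = (prodl G l)⁻¹.
Proof.
  induction l; simpl.
  - rewrite invg1. reflexivity.
  - rewrite prodl_app, IHl. simpl. rewrite mulg1, invMg. reflexivity.
Qed.

Lemma has_len_one : has_len G S (one G) 0.
Proof. exists []. repeat split; auto. Qed.

Lemma has_len_mul g h n m :
  has_len G S g n -> has_len G S h m -> has_len G S (g ⋅ h) (n + m).
Proof.
  intros (l1 & L1 & F1 & P1) (l2 & L2 & F2 & P2). exists (l1 ++ l2). repeat split.
  - rewrite length_app. lia.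
  - apply Forall_app. auto.
  - rewrite prodl_app. subst. reflexivity.
Qed.

Lemma has_len_inv g n : has_len G S g n -> has_len G S g⁻¹ n.
Proof.
  intros (l & L & F & P). exists (rev (map (inv G) l)). repeat split.
  - rewrite length_rev, length_map. auto.
  - apply Forall_rev, Forall_map. eapply Forall_impl; [|exact F].
    intros s [hs|hs]; [right; rewrite invgK | left]; auto.
  - rewrite prodl_rev_inv, P. reflexivity.
Qed.

Lemma word_len_exists g : exists n, word_len G S g n.
Proof.
  destruct (gen g) as [n hn].
  induction n as [n IH] using (well_founded_induction lt_wf).
  destruct (classic (exists m, m < n /\ has_len G S g m)) as [(m & lt_mn & hm)|shortest].
  - exact (IH m lt_mn hm).
  - exists n. split; auto. intros m hm. apply Nat.nlt_ge. eauto.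
Qed.

Definition wlen (g : G) : nat := epsilon (inhabits 0) (word_len G S g).

Lemma wlen_spec g : word_len G S g (wlen g).
Proof. unfold wlen. apply epsilon_spec, word_len_exists. Qed.

Lemma has_len_wlen g : has_len G S g (wlen g).
Proof. apply wlen_spec. Qed.

Lemma wlen_min g n : has_len G S g n -> wlen g <= n.
Proof. apply wlen_spec. Qed.

Lemma wlen_one : wlen (one G) = 0.
Proof. pose proof (wlen_min _ _ has_len_one). lia. Qed.

Lemma wlen_mul g h : wlen (g ⋅ h) <= wlen g + wlen h.
Proof. apply wlen_min, has_len_mul; apply has_len_wlen. Qed.

Lemma wlen_inv g : wlen g⁻¹ = wlen g.
Proof.
  apply Nat.le_antisymm; apply wlen_min.
  - apply has_len_inv, has_len_wlen.
  - rewrite <- (invgK g) at 1. apply has_len_inv, has_len_wlen.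
Qed.

Lemma wlen_gpow g n : wlen (gpow G g n) <= n * wlen g.
Proof.
  induction n; simpl.
  - rewrite wlen_one. auto.
  - pose proof (wlen_mul g (gpow G g n)). lia.
Qed.

Definition dist (x y : G) : nat := wlen (x⁻¹ ⋅ y).

Lemma wdist_dist x y : wdist G S x y (dist x y).
Proof. apply wlen_spec. Qed.

Lemma dist1g x : dist (one G) x = wlen x.
Proof. unfold dist. rewrite invg1, mul1g. reflexivity. Qed.

Lemma dist_sym x y : dist x y = dist y x.
Proof. unfold dist. rewrite <- wlen_inv, invMg, invgK. reflexivity. Qed.

Lemma dist_triangle x y z : dist x z <= dist x y + dist y z.
Proof.
  unfold dist. replace (x⁻¹ ⋅ z) with (x⁻¹ ⋅ y ⋅ (y⁻¹ ⋅ z)).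
  - apply wlen_mul.
  - rewrite <- mulA, mulKVg. reflexivity.
Qed.

Lemma dist_mull g x y : dist (g ⋅ x) (g ⋅ y) = dist x y.
Proof. unfold dist. rewrite invMg, <- mulA, mulKg. reflexivity. Qed.

Fixpoint words (A : list G) (n : nat) : list (list G) :=
  match n with
  | O => [[]]
  | Datatypes.S k => flat_map (fun s => map (cons s) (words A k)) A
  end.

Lemma words_complete (A l : list G) : Forall (fun s => In s A) l -> In l (words A (length l)).
Proof.
  induction 1; simpl; auto.
  apply in_flat_map. exists x. split; auto. apply in_map. auto.
Qed.

Definition ball (r : nat) : list G :=
  flat_map (fun n => map (prodl G) (words (S ++ map (inv G) S) n)) (seq 0 (Datatypes.S r)).

Lemma mem_ball r g : wlen g <= r -> In g (ball r).
Proof.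
  intro hr. destruct (has_len_wlen g) as (l & L & F & P).
  apply in_flat_map. exists (wlen g). split.
  - apply in_seq. lia.
  - rewrite <- L, <- P. apply in_map, words_complete.
    eapply Forall_impl; [|exact F]. intros s [hs|hs]; apply in_app_iff; [left; auto|right].
    rewrite <- (invgK s). apply in_map. auto.
Qed.

Lemma wlen_unbounded (f : nat -> G) :
  (forall m m', f m = f m' -> m = m') -> forall r, exists M, r < wlen (f M).
Proof.
  intros inj r. apply NNPP. intro bounded.
  set (N := length (ball r)).
  assert (pigeonhole : length (map f (seq 0 (Datatypes.S N))) <= N).
  { apply NoDup_incl_length.
    - apply Injective_map_NoDup; [exact inj | apply seq_NoDup].
    - intros g hg. apply in_map_iff in hg as (m & <- & _).
      apply mem_ball, Nat.nlt_ge. eauto. }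
  rewrite length_map, length_seq in pigeonhole. lia.
Qed.

Definition geodesic (x y : G) (q : nat -> G) : Prop :=
  forall k, k <= dist x y -> dist x (q k) = k /\ dist (q k) y = dist x y - k.

Lemma geodesic_mull g x y q : geodesic x y q -> geodesic (g ⋅ x) (g ⋅ y) (fun k => g ⋅ q k).
Proof. intros hq k. rewrite !dist_mull. apply hq. Qed.

Lemma geodesic_exists x y : exists q, geodesic x y q.
Proof.
  assert (from_one : forall z, exists q, geodesic (one G) z q).
  { intro z. destruct (has_len_wlen z) as (l & L & F & P).
    exists (fun k => prodl G (firstn k l)). intro k. rewrite !dist1g. intro hk.
    assert (split : prodl G (firstn k l) ⋅ prodl G (skipn k l) = z).
    { rewrite <- prodl_app, firstn_skipn. auto. }
    unfold dist. replace ((prodl G (firstn k l))⁻¹ ⋅ z) with (prodl G (skipn k l))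
      by (rewrite <- split, mulKg; reflexivity).
    rewrite <- (firstn_skipn k l) in F. apply Forall_app in F as [F1 F2].
    assert (h1 : wlen (prodl G (firstn k l)) <= k).
    { apply wlen_min. eexists; repeat split; eauto. rewrite length_firstn. lia. }
    assert (h2 : wlen (prodl G (skipn k l)) <= wlen z - k).
    { apply wlen_min. eexists; repeat split; eauto. rewrite length_skipn. lia. }
    pose proof (wlen_mul (prodl G (firstn k l)) (prodl G (skipn k l))).
    rewrite split in *. lia. }
  destruct (from_one (x⁻¹ ⋅ y)) as [q hq]. exists (fun k => x ⋅ q k).
  pose proof (geodesic_mull x _ _ _ hq) as hxq. rewrite mulg1, mulKVg in hxq. exact hxq.
Qed.

Section Hyperbolic.
Variable delta : nat.
Hypothesis hyp : delta_hyperbolic G S delta.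

Definition gromov2 (w x y : G) : Z :=
  (Z.of_nat (dist w x) + Z.of_nat (dist w y) - Z.of_nat (dist x y))%Z.

Lemma gromov_four_point w x y z :
  (gromov2 w x z >= Z.min (gromov2 w x y) (gromov2 w y z) - 2 * Z.of_nat delta)%Z.
Proof. apply (hyp x y z w); apply wdist_dist. Qed.

Lemma geodesic_near_point x y q w : geodesic x y q ->
  exists k, k <= dist x y /\
    (2 * Z.of_nat (dist w (q k)) <= gromov2 w x y + 1 + 4 * Z.of_nat delta)%Z.
Proof.
  intro hq.
  pose proof (Nat.div_mod (dist x w + dist x y - dist w y) 2 ltac:(lia)).
  pose proof (Nat.mod_upper_bound (dist x w + dist x y - dist w y) 2 ltac:(lia)).
  (* [k] is the Gromov product (w|y)_x rounded down, whence the [+ 1]. *)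
  set (k := (dist x w + dist x y - dist w y) / 2) in *.
  pose proof (dist_triangle x y w). pose proof (dist_triangle w x y).
  pose proof (dist_sym x w). pose proof (dist_sym y w).
  assert (hk : k <= dist x y) by lia.
  exists k. split; [exact hk|].
  destruct (hq k hk) as [q1 q2].
  pose proof (gromov_four_point x w y (q k)).
  pose proof (dist_sym w (q k)). pose proof (dist_sym y (q k)).
  unfold gromov2 in *. lia.
Qed.

Lemma geodesic_translate_close z q D i g :
  geodesic (one G) z q -> wlen g <= D -> dist z (g ⋅ z) <= D ->
  2 * D <= i -> i + D <= wlen z ->
  exists j, j <= wlen z /\ dist (q i) (g ⋅ q j) <= 4 * delta.
Proof.
  intros hq hg hgz hi hiz.
  assert (hz : dist (one G) z = wlen z) by apply dist1g.
  assert (hg1 : dist (one G) g = wlen g) by apply dist1g.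
  destruct (hq i ltac:(lia)) as [p1 p2].
  assert (translated : geodesic g (g ⋅ z) (fun k => g ⋅ q k)).
  { pose proof (geodesic_mull g _ _ _ hq) as hgq. rewrite mulg1 in hgq. exact hgq. }
  assert (hgR : dist g (g ⋅ z) = wlen z) by (unfold dist; rewrite mulKg; reflexivity).
  destruct (geodesic_near_point _ _ _ (q i) translated) as (j & hj & near).
  exists j. split; [lia|].
  (* Since g moves 1 and z by at most D and q i is far from both, (g|gz)_(q i) <= 2 delta. *)
  pose proof (gromov_four_point (one G) (q i) z (g ⋅ z)).
  pose proof (gromov_four_point (g ⋅ z) (q i) (one G) g).
  pose proof (dist_sym (g ⋅ z) (q i)). pose proof (dist_sym (g ⋅ z) g).
  pose proof (dist_sym (g ⋅ z) (one G)). pose proof (dist_sym (q i) (one G)).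
  pose proof (dist_sym z (g ⋅ z)).
  pose proof (dist_triangle (one G) (g ⋅ z) z). pose proof (dist_triangle (q i) z (g ⋅ z)).
  unfold gromov2 in *. lia.
Qed.

Lemma centralizer_ball_count z D (l : list G) :
  3 * D <= wlen z -> NoDup l -> (forall g, In g l -> wlen g <= D /\ commute g z) ->
  length l <= length (ball (4 * delta)) * (2 * D + 8 * delta + 1).
Proof.
  intros hz nodup hl.
  destruct (geodesic_exists (one G) z) as [q hq].
  set (i := 2 * D). set (lo := i - D - 4 * delta).
  assert (cover : incl l (map (fun pr => q i ⋅ fst pr ⋅ (q (snd pr))⁻¹)
                     (list_prod (ball (4 * delta)) (seq lo (2 * D + 8 * delta + 1))))).
  { intros g hgl. destruct (hl g hgl) as [hg cg].
    assert (hgz : dist z (g ⋅ z) <= D) by (unfold dist; rewrite cg, mulKg; exact hg).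
    destruct (geodesic_translate_close z q D i g hq hg hgz ltac:(lia) ltac:(lia))
      as (j & hj & near).
    assert (window : lo <= j <= i + D + 4 * delta).
    { pose proof (dist1g z).
      destruct (hq i ltac:(lia)) as [p1 _]. destruct (hq j ltac:(lia)) as [q1 _].
      assert (hgj : dist g (g ⋅ q j) = j)
        by (rewrite <- (mulg1 g) at 1; rewrite dist_mull; exact q1).
      pose proof (dist1g g). pose proof (dist_sym g (one G)).
      pose proof (dist_sym (q i) (g ⋅ q j)).
      pose proof (dist_triangle (one G) g (g ⋅ q j)).
      pose proof (dist_triangle (one G) (g ⋅ q j) (q i)).
      pose proof (dist_triangle g (one G) (g ⋅ q j)).
      pose proof (dist_triangle (one G) (q i) (g ⋅ q j)).
      lia. }
    apply in_map_iff. exists ((q i)⁻¹ ⋅ (g ⋅ q j), j). split.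
    - simpl. rewrite mulKVg, <- mulA, mulgV, mulg1. reflexivity.
    - apply in_prod.
      + apply mem_ball. exact near.
      + apply in_seq. lia. }
  pose proof (NoDup_incl_length nodup cover) as bound.
  rewrite length_map, length_prod, length_seq in bound. exact bound.
Qed.

Lemma no_commuting_Z2 a b : commute a b ->
  ~ (forall n m n' m', gpow G a n ⋅ gpow G b m = gpow G a n' ⋅ gpow G b m' -> n = n' /\ m = m').
Proof.
  intros cab inj.
  set (C := length (ball (4 * delta))). set (c := wlen a + wlen b).
  (* X is chosen so that C (2 X c + 8 delta + 1) <= X² < (X + 1)², the size of the grid. *)
  set (X := C * (2 * c + 8 * delta + 1)). set (D := X * c).
  assert (b_inj : forall m m', gpow G b m = gpow G b m' -> m = m').
  { intros m m' E. apply (inj 0 m 0 m'). simpl. rewrite !mul1g. exact E. }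
  destruct (wlen_unbounded _ b_inj (3 * D)) as [M long].
  set (grid := map (fun nm => gpow G a (fst nm) ⋅ gpow G b (snd nm))
                   (list_prod (seq 0 (X + 1)) (seq 0 (X + 1)))).
  assert (grid_nodup : NoDup grid).
  { apply Injective_map_NoDup; [|apply NoDup_list_prod; apply seq_NoDup].
    intros [n m] [n' m'] E. simpl in E. apply inj in E as [-> ->]. reflexivity. }
  assert (grid_short_commuting : forall g, In g grid -> wlen g <= D /\ commute g (gpow G b M)).
  { intros g hg. apply in_map_iff in hg as ([n m] & <- & hnm).
    apply in_prod_iff in hnm as [hn hm]. apply in_seq in hn, hm. simpl. split.
    - pose proof (wlen_mul (gpow G a n) (gpow G b m)).
      pose proof (wlen_gpow a n). pose proof (wlen_gpow b m).
      unfold D, c. nia.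
    - apply commuteM; apply commute_gpow, commute_sym, commute_gpow;
        [apply commute_sym, cab | reflexivity]. }
  pose proof (centralizer_ball_count (gpow G b M) D grid ltac:(lia)
                grid_nodup grid_short_commuting) as count.
  unfold grid in count. rewrite length_map, length_prod, length_seq in count. fold C in count.
  unfold D, X in count. destruct C as [|C']; nia.
Qed.

End Hyperbolic.
End WordMetric.

Lemma retract_kernel_centralizer (G : Group) (H : G -> Prop) (phi : G -> G) :
  is_hom G phi -> (forall g, H (phi g)) -> (forall h, H h -> phi h = h) ->
  forall g x, ~ H g -> H x -> H (g ⋅ (x ⋅ g⁻¹)) ->
  exists c, c <> one G /\ phi c = one G /\ commute c x.
Proof.
  intros hom phi_in phi_id g x hg hx hgx.
  assert (same_conj : g ⋅ (x ⋅ g⁻¹) = phi g ⋅ (x ⋅ (phi g)⁻¹)).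
  { rewrite <- (phi_id _ hgx) at 1. rewrite !hom, hom_inv, (phi_id x hx); auto. }
  exists ((phi g)⁻¹ ⋅ g). split; [|split].
  - intro c1. apply hg.
    replace g with (phi g) by (apply (mulgI (phi g)⁻¹); rewrite c1, mulVg; reflexivity).
    apply phi_in.
  - rewrite hom, hom_inv, (phi_id _ (phi_in g)); auto. apply mulVg.
  - unfold commute.
    transitivity ((phi g)⁻¹ ⋅ (g ⋅ (x ⋅ g⁻¹) ⋅ g)).
    + rewrite <- !mulA, mulVg, mulg1. reflexivity.
    + rewrite same_conj, <- !mulA, mulKg. reflexivity.
Qed.

Theorem lemma5p3 (G : Group) (hG : hyperbolic_group G) (tfG : torsion_free G)
  (H : G -> Prop) (Hsub : is_subgroup G H) (Hret : is_retract G H) :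
  malnormal G H.
Proof.
  intros g hg x hx hgx. apply NNPP. intro nx.
  destruct hG as (S & delta & gen & hyp).
  destruct Hret as (phi & hom & phi_in & phi_id).
  destruct (retract_kernel_centralizer G H phi hom phi_in phi_id g x hg hx hgx)
    as (c & nc & phic & cx).
  apply (no_commuting_Z2 G S gen delta hyp x c (commute_sym _ _ cx)).
  exact (gpow_pair_inj phi hom x c tfG nx nc (phi_id x hx) phic).
Qed.
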